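(* Let $E,F$ be Banach spaces over $\mathbb{K}$, $m\in\mathbb{N}$ and $P\in\mathcal{P}(^mE;F)$. The following are equivalent: (a) $P$ has finite rank; (b) $\Delta^1_kP$ is a finite rank operator for every $k\in\mathbb{N}$; (c) $\Delta^1_kP$ is a finite rank operator for some $k\in\mathbb{N}$.
   Context: Banach spaces are over $\mathbb{K}=\mathbb{R}$ or $\mathbb{C}$. $\mathcal{P}(^jX;Y)$ is the space of continuous $j$-homogeneous polynomials $X\to Y$, $\mathcal{P}(^jX)=\mathcal{P}(^jX;\mathbb{K})$. $\Delta^1_kP\colon\mathcal{P}(^kF)\to\mathcal{P}(^{mk}E)$ is the bounded linear operator $\Delta^1_kP(q)=q\circ P$. A polynomial (or operator) has finite rank if the linear span of its range is finite dimensional. *)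

From HB Require Import structures.
From mathcomp Require Import all_boot all_order all_algebra.
From mathcomp Require Import all_classical all_reals all_analysis.
From mathcomp Require Import complex.
Set Implicit Arguments. Unset Strict Implicit. Unset Printing Implicit Defensive.
Import Order.TTheory GRing.Theory Num.Theory.
Import numFieldNormedType.Exports.
Local Open Scope ring_scope.

Definition multilinear (K : numFieldType) (X Y : lmodType K) (j : nat)
  (A : ('I_j -> X) -> Y) : Prop :=
  forall (i : 'I_j) (x : 'I_j -> X) (a : K) (u v : X),
    A (fun l => if l == i then a *: u + v else x l)
    = a *: A (fun l => if l == i then u else x l)
      + A (fun l => if l == i then v else x l).

(* P is a continuous j-homogeneous polynomial X -> Y, i.e. an element of
   P(^j X; Y): P x = A(x,...,x) for some j-linear A, and P is continuous. *)
Definition hpoly (K : numFieldType) (X Y : normedModType K) (j : nat)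
  (P : X -> Y) : Prop :=
  (exists A : ('I_j -> X) -> Y, multilinear A /\ forall x, P x = A (fun _ => x))
  /\ continuous P.

Definition finite_rank (K : numFieldType) (T : Type) (Y : lmodType K)
  (f : T -> Y) : Prop :=
  exists (n : nat) (v : 'I_n -> Y),
    forall t, exists c : 'I_n -> K, f t = \sum_(i < n) c i *: v i.

(* Delta^1_k P : P(^k F) -> P(^{mk} E), q |-> q \o P, has finite rank: the span
   of { q \o P | q in P(^k F) } (inside the space of scalar functions on E)
   is finite dimensional. *)
Definition Delta_finite_rank (K : numFieldType) (E F : normedModType K)
  (k : nat) (P : E -> F) : Prop :=
  exists (n : nat) (v : 'I_n -> E -> K),
    forall q : F -> K, hpoly (X := F) (Y := K^o) k q ->
      exists c : 'I_n -> K, forall x, q (P x) = \sum_(i < n) c i * v i x.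

Definition thm13_over (K : numFieldType) : Prop :=
  forall (E F : completeNormedModType K) (m : nat) (P : E -> F),
    (0 < m)%N -> hpoly m P ->
    [/\ (finite_rank P -> forall k, (0 < k)%N -> Delta_finite_rank k P),
        ((forall k, (0 < k)%N -> Delta_finite_rank k P) ->
           exists k, (0 < k)%N /\ Delta_finite_rank k P)
      & ((exists k, (0 < k)%N /\ Delta_finite_rank k P) -> finite_rank P)].

From HB Require Import structures.
From mathcomp Require Import all_boot all_order all_algebra.
From mathcomp Require Import all_classical all_reals all_analysis.
From mathcomp Require Import complex lra.
Set Implicit Arguments. Unset Strict Implicit. Unset Printing Implicit Defensive.
Import Order.TTheory GRing.Theory Num.Theory.
Import numFieldNormedType.Exports.
Local Open Scope ring_scope.

(* (a) => (b): if P x = \sum_j c_j(x) w_j and q = A(_, ..., _) with A k-linear,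
   expanding A(P x, ..., P x) multilinearly writes q \o P as a combination of
   the monomials \prod_l c_(j_l)(x), a finite family that does not depend on q.
   (c) => (a): if P has infinite rank, the Hahn-Banach theorem gives points
   x_0, ..., x_n and continuous functionals phi_0, ..., phi_n with
   phi_j (P x_i) = delta_ij; the n+1 polynomials phi_j^k \o P then take the
   identity matrix as values at the x_i, so they cannot lie in an
   n-dimensional space.  Neither direction uses that P is a homogeneous
   polynomial.  Over C the functionals come from the real Hahn-Banach theorem
   on the underlying real space, through phi x = u x - i u (i x). *)

Section MultilinearSlot.
Variables (K : numFieldType) (X Y : lmodType K) (k : nat) (A : ('I_k -> X) -> Y).
Hypothesis A_ml : multilinear A.

Lemma multilinear0 i x : A (fun l => if l == i then 0 else x l) = 0.
Proof.
have := A_ml i x 1 0 0; rewrite scaler0 addr0 scale1r => /eqP.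
by rewrite -subr_eq subrr eq_sym => /eqP.
Qed.

Lemma multilinear_sum i x (I : Type) (r : seq I) (a : I -> K) (w : I -> X) :
  A (fun l => if l == i then \sum_(j <- r) a j *: w j else x l) =
  \sum_(j <- r) a j *: A (fun l => if l == i then w j else x l).
Proof.
elim: r => [|j r IH]; first by rewrite !big_nil multilinear0.
by rewrite !big_cons A_ml IH.
Qed.

End MultilinearSlot.

Definition spanned_by (T : Type) (K : numFieldType) (I : finType)
  (mu : I -> T -> K) (g : T -> K) :=
  exists lam : I -> K, forall t, g t = \sum_i lam i * mu i t.

Section DiagonalExpansion.
Variables (K : numFieldType) (X : lmodType K) (T : Type) (n k : nat).
Variables (c : T -> 'I_n -> K) (w : 'I_n -> X).

Let S t := \sum_(j < n) c t j *: w j.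

Lemma multilinear_prefix_spanned s : (s <= k)%N ->
  exists (I : finType) (mu : I -> T -> K),
    forall A : ('I_k -> X) -> K^o, multilinear A -> forall x,
      spanned_by mu (fun t => A (fun l => if (l < s)%N then S t else x l)).
Proof.
elim: s => [_|s IH lt_sk].
  exists 'I_1, (fun _ _ => 1) => A _ x; exists (fun _ => A x) => t.
  by rewrite big_ord1 mulr1; congr A; apply: funext => l; rewrite ltn0.
have [I [mu mu_span]] := IH (ltnW lt_sk).
exists ('I_n * I)%type, (fun ji t => c t ji.1 * mu ji.2 t) => A A_ml x.
(* Expand slot [s] by linearity: the j-th summand is the induction hypothesis
   with slot [s] frozen to [w j]. *)
pose i0 := Ordinal lt_sk.
pose x_ j := fun l => if l == i0 then w j else x l.
have /choice[lam lamP] := fun j => mu_span A A_ml (x_ j).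
exists (fun ji => lam ji.1 ji.2) => t.
rewrite -(pair_bigA _ (fun j i => lam j i * (c t j * mu i t))) /=.
have -> : (fun l : 'I_k => if (l < s.+1)%N then S t else x l) =
          (fun l => if l == i0 then S t else if (l < s)%N then S t else x l).
  by apply: funext => l; rewrite ltnS leq_eqVlt -val_eqE /=; case: ltngtP.
rewrite multilinear_sum //; apply: eq_bigr => j _.
have -> : (fun l : 'I_k => if l == i0 then w j else if (l < s)%N then S t else x l) =
          (fun l => if (l < s)%N then S t else x_ j l).
  by apply: funext => l; rewrite /x_ -val_eqE /=; case: ltngtP.
by rewrite lamP scaler_sumr; apply: eq_bigr => i _; rewrite /GRing.scale /= mulrCA.
Qed.

Lemma multilinear_diagonal_spanned :
  exists (I : finType) (mu : I -> T -> K),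
    forall A : ('I_k -> X) -> K^o, multilinear A ->
      spanned_by mu (fun t => A (fun _ => S t)).
Proof.
have [I [mu mu_span]] := multilinear_prefix_spanned (leqnn k).
exists I, mu => A A_ml; have [lam lamP] := mu_span A A_ml (fun _ => 0).
by exists lam => t; rewrite -lamP; congr A; apply: funext => l; rewrite ltn_ord.
Qed.

End DiagonalExpansion.

Lemma Delta_finite_rank_of_finite_rank (K : numFieldType) (E F : normedModType K)
    (P : E -> F) (k : nat) :
  finite_rank P -> Delta_finite_rank k P.
Proof.
move=> [n [w /choice[c Pc]]].
have [I [mu mu_span]] := multilinear_diagonal_spanned k c w.
exists #|I|, (fun i => mu (enum_val i)) => q [[A [A_ml qA]] _].
have [lam lamP] := mu_span A A_ml.
exists (fun i => lam (enum_val i)) => x.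
by rewrite qA Pc lamP (big_enum_val (A := I)).
Qed.

Section Scalar.
Variables (K : numFieldType) (V : lmodType K).
Implicit Types (f : V -> K) (x y : V).

Lemma scalar0 f : scalar f -> f 0 = 0.
Proof. by move=> fL; rewrite -[0]subr0 (zmod_morphism_linear fL) subrr. Qed.

Lemma scalar_sumZ f (I : Type) (r : seq I) (a : I -> K) (v : I -> V) :
  scalar f -> f (\sum_(i <- r) a i *: v i) = \sum_(i <- r) a i * f (v i).
Proof.
move=> fL; elim: r => [|i r IH]; first by rewrite !big_nil scalar0.
by rewrite !big_cons fL IH.
Qed.

Lemma scalarN f x : scalar f -> f (- x) = - f x.
Proof. by move=> fL; rewrite -scaleN1r (scalable_linear fL) /= mulN1r. Qed.

Lemma scalarD f x y : scalar f -> f (x + y) = f x + f y.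
Proof. by move=> fL; have := fL 1 x y; rewrite scale1r mul1r. Qed.

End Scalar.

Section ContinuousScalar.
Variables (K : numFieldType) (V : normedModType K).

Definition continuous_scalar (f : V -> K) := scalar f /\ continuous f.

Lemma continuous_scalarB (f g : V -> K) :
  continuous_scalar f -> continuous_scalar g ->
  continuous_scalar (fun y => f y - g y).
Proof.
move=> [fL fC] [gL gC]; split; last by move=> y; apply: cvgB; [exact: fC | exact: gC].
by move=> a x y; rewrite fL gL mulrBr addrACA opprD.
Qed.

Lemma continuous_scalarZ (a : K) (f : V -> K) :
  continuous_scalar f -> continuous_scalar (fun y => a * f y).
Proof.
move=> [fL fC]; split; last by move=> y; apply: cvgM; [exact: cvg_cst | exact: fC].
by move=> b x y; rewrite fL mulrDr mulrCA.
Qed.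

Lemma continuous_scalar_sum (N : nat) (f : 'I_N -> V -> K) :
  (forall i, continuous_scalar (f i)) ->
  continuous_scalar (fun y => \sum_(i < N) f i y).
Proof.
move=> fS; split=> [a x y|].
  by rewrite mulr_sumr -big_split; apply: eq_bigr => i _; rewrite (fS i).1.
by apply: continuous_big => [|i _]; [exact: add_continuous | exact: (fS i).2].
Qed.

Lemma bounded_zmod_morphism_continuous (f : V -> K) (C : K) :
  zmod_morphism f -> 0 < C -> (forall x, `|f x| <= C * `|x|) -> continuous f.
Proof.
move=> fB C0 fC x; apply/(@cvgrPdist_lt _ _ _ (nbhs x)) => e e0; near=> z.
rewrite -fB (le_lt_trans (fC _)) // -ltr_pdivlMl //.
by near: z; apply: cvgr_dist_lt => //; rewrite mulrC divr_gt0.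
Unshelve. all: by end_near. Qed.

End ContinuousScalar.

Lemma hpoly_expr (K : numFieldType) (F : normedModType K) (psi : F -> K) (k : nat) :
  continuous_scalar psi -> hpoly (X := F) (Y := K^o) k (fun y => psi y ^+ k).
Proof.
move=> [psiL psiC]; split.
  exists (fun y : 'I_k -> F => \prod_(l < k) psi (y l) : K^o); split.
    move=> i x a u v; pose y w l := if l == i then w else x l.
    have split_i w : \prod_(l < k) psi (y w l) =
                     psi w * \prod_(l < k | l != i) psi (x l).
      rewrite (bigD1 i) //= /y eqxx; congr (_ * _).
      by apply: eq_bigr => l /negbTE ->.
    by rewrite !split_i psiL mulrDl -mulrA.
  by move=> y; rewrite prodr_const card_ord.
have -> : (fun y => psi y ^+ k) = (fun y => \prod_(l < k) psi y).
  by apply: funext => y; rewrite prodr_const card_ord.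
by apply: continuous_big => [|l _ //]; exact: mul_continuous.
Qed.

Definition separating_dual (K : numFieldType) (F : normedModType K) :=
  forall z : F, z != 0 -> exists2 psi : F -> K, continuous_scalar psi & psi z = 1.

Section Biorthogonal.
Variables (K : numFieldType) (T : Type) (F : normedModType K) (P : T -> F).

Definition biorthogonal (N : nat) (x : nat -> T) (phi : nat -> F -> K) :=
  (forall j, continuous_scalar (phi j)) /\
  forall i j, (i < N)%N -> (j < N)%N -> phi j (P (x i)) = (i == j)%:R.

(* A Gram-Schmidt step: phiN vanishes at the old P (x i) and is 1 at P t. *)
Lemma biorthogonal_succ N x phi t psi :
  biorthogonal N x phi -> continuous_scalar psi ->
  psi (P t - \sum_(i < N) phi i (P t) *: P (x i)) = 1 ->
  let phiN y := psi y - \sum_(l < N) psi (P (x l)) * phi l y in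
  biorthogonal N.+1 (fun i => if i == N then t else x i)
    (fun j y => if j == N then phiN y else phi j y - phi j (P t) * phiN y).
Proof.
move=> [phiS phiP] psiS psi_t phiN.
have phiNS : continuous_scalar phiN.
  apply: continuous_scalarB => //; apply: continuous_scalar_sum => l.
  exact: continuous_scalarZ.
have phiN_old i : (i < N)%N -> phiN (P (x i)) = 0.
  move=> ltiN; rewrite /phiN (bigD1 (Ordinal ltiN)) //= phiP // eqxx mulr1.
  rewrite big1 ?addr0 ?subrr // => l /negbTE; rewrite eq_sym -val_eqE /= => il.
  by rewrite phiP // il mulr0.
have phiN_new : phiN (P t) = 1.
  rewrite -psi_t (zmod_morphism_linear psiS.1) scalar_sumZ; last exact: psiS.1.
  by congr (_ - _); apply: eq_bigr => l _; rewrite mulrC.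
split=> [j|i j]; first by case: eqP => _ //; exact/continuous_scalarB/continuous_scalarZ.
rewrite ltnS leq_eqVlt => /predU1P[->|ltiN];
  rewrite ltnS leq_eqVlt => /predU1P[->|ltjN].
- by rewrite !eqxx phiN_new.
- by rewrite eqxx (ltn_eqF ltjN) phiN_new mulr1 subrr eq_sym (ltn_eqF ltjN).
- by rewrite eqxx (ltn_eqF ltiN) phiN_old.
- by rewrite (ltn_eqF ltiN) (ltn_eqF ltjN) phiN_old // mulr0 subr0 phiP.
Qed.

Lemma biorthogonal_system : separating_dual F -> ~ finite_rank P ->
  forall N, exists x phi, biorthogonal N x phi.
Proof.
move=> sepF Pinf; elim=> [|N [x [phi xphi]]].
  (* T is inhabited, as otherwise P would have rank 0. *)
  have [t0 _] : exists t : T, True.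
    by apply: contrapT => noT; apply: Pinf; exists 0, (fun=> 0) => t; case: noT; exists t.
  exists (fun _ => t0), (fun _ _ => 0); split=> // j.
  by split; [move=> a u v; rewrite mulr0 addr0 | exact: cst_continuous].
have [t Pt] : exists t, ~ exists c : 'I_N -> K, P t = \sum_(i < N) c i *: P (x i).
  by apply/existsNP => Pspan; apply: Pinf; exists N, (fun i => P (x i)).
have [|psi psiS psi_t] := sepF (P t - \sum_(i < N) phi i (P t) *: P (x i)).
  by rewrite subr_eq0; apply/eqP => PtE; apply: Pt; exists (fun i => phi i (P t)).
by do 2 eexists; exact: biorthogonal_succ psiS psi_t.
Qed.

End Biorthogonal.

Lemma finite_rank_of_Delta (K : numFieldType) (E F : normedModType K)
    (P : E -> F) (k : nat) :
  separating_dual F -> (0 < k)%N -> Delta_finite_rank k P -> finite_rank P.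
Proof.
move=> sepF k_gt0 [n [v Pv]]; apply: contrapT => Pinf.
have [x [phi [phiS phiP]]] := biorthogonal_system sepF Pinf n.+1.
have /choice[C PC] (j : 'I_n.+1) : exists C : 'I_n -> K,
    forall y, phi j (P y) ^+ k = \sum_(i < n) C i * v i y.
  exact: Pv (fun y => phi j y ^+ k) (hpoly_expr k (phiS j)).
(* The identity matrix of size n+1 would factor through K^n. *)
pose M1 := \matrix_(j < n.+1, l < n) C j l.
pose M2 := \matrix_(l < n, i < n.+1) v l (x i).
have M1M2 : M1 *m M2 = 1%:M.
  apply/matrixP => j i; rewrite !mxE; under eq_bigr do rewrite !mxE.
  rewrite -PC phiP // eq_sym val_eqE.
  by case: (j == i); rewrite ?expr1n // mulr0n expr0n eqn0Ngt k_gt0.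
have := mxrankM_maxl M1 M2; rewrite M1M2 mxrank1 => rank_le.
by have := leq_trans rank_le (rank_leq_col M1); rewrite ltnn.
Qed.

Section HahnBanach.
Local Open Scope classical_set_scope.
Variables (R : realType) (V : lmodType R) (p : V -> R).
Hypotheses (p_subadd : forall x y, p (x + y) <= p x + p y)
  (p_homog : forall t x, p (t *: x) = `|t| * p x).

Lemma seminorm0 : p 0 = 0.
Proof. by rewrite -(scale0r 0) p_homog normr0 mul0r. Qed.

Lemma seminormN x : p (- x) = p x.
Proof. by rewrite -scaleN1r p_homog normrN normr1 mul1r. Qed.

Lemma seminorm_ge0 x : 0 <= p x.
Proof.
have := p_subadd x (- x).
by rewrite subrr seminorm0 seminormN -mulr2n pmulrn_lge0.
Qed.

(* Linear functionals on subspaces of V dominated by p, represented by their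
   graphs so that a chain of extensions is bounded by its union. *)
Definition dominated_graph (G : set (V * R)) :=
  [/\ forall x a b, G (x, a) -> G (x, b) -> a = b,
      forall x a y b, G (x, a) -> G (y, b) -> G (x + y, a + b),
      forall t x a, G (x, a) -> G (t *: x, t * a) &
      forall x a, G (x, a) -> a <= p x].

Definition graph_ext (G : set (V * R)) (y : V) (c : R) : set (V * R) :=
  [set q | exists d a t, G (d, a) /\ q = (d + t *: y, a + t * c)].

Lemma graph_ext_sub G y c : G `<=` graph_ext G y c.
Proof. by move=> [d a] Gda; exists d, a, 0; rewrite scale0r mul0r !addr0. Qed.

Lemma graph_ext_point G y c : G (0, 0) -> graph_ext G y c (y, c).
Proof. by move=> G00; exists 0, 0, 1; rewrite scale1r mul1r !add0r. Qed.

Lemma graph_ext_functional G y c : dominated_graph G -> (~ exists a, G (y, a)) ->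
  forall x a b, graph_ext G y c (x, a) -> graph_ext G y c (x, b) -> a = b.
Proof.
move=> [Gfun GD GZ _] Gy x a b [d1 [a1 [t1 [G1 [-> ->]]]]].
move=> [d2 [a2 [t2 [G2 [+ ->]]]]].
have [<-|t12] := eqVneq t1 t2 => x12.
  by move: G1; rewrite (addIr _ x12) => G1; rewrite (Gfun _ _ _ G1 G2).
case: Gy; exists ((t1 - t2)^-1 * (a2 - a1)).
have -> : y = (t1 - t2)^-1 *: (d2 - d1).
  apply: (@scalerI _ _ (t1 - t2)); first by rewrite subr_eq0.
  rewrite scalerA mulfV ?subr_eq0 // scale1r scalerBl.
  by rewrite -(addrK (t2 *: y) d2) -x12 addrAC [d1 + _]addrC addrK.
apply: (GZ); apply: GD G2 _; rewrite -scaleN1r -[- a1]mulN1r; exact: GZ.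
Qed.

Lemma graph_ext_bound G y c d a t : dominated_graph G ->
  (forall d' a', G (d', a') -> c <= p (d' + y) - a') ->
  G (d, a) -> 0 < t -> a + t * c <= p (d + t *: y).
Proof.
move=> [_ _ GZ _] ub Gda t_gt0; have t0 : t != 0 by rewrite gt_eqF.
have := ub _ _ (GZ t^-1 _ _ Gda); rewrite -(ler_pM2l t_gt0) mulrBr mulrA mulfV //.
rewrite mul1r -[t in t * p _]gtr0_norm // -p_homog scalerDr scalerA mulfV //.
by rewrite scale1r lerBrDl.
Qed.

Lemma dominated_graph_ext G y c : dominated_graph G -> (~ exists a, G (y, a)) ->
  (forall d a, G (d, a) -> a - p (d - y) <= c) ->
  (forall d a, G (d, a) -> c <= p (d + y) - a) ->
  dominated_graph (graph_ext G y c).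
Proof.
move=> Gdom Gy lb ub; have [_ GD GZ Gp] := Gdom; split.
- exact: graph_ext_functional.
- move=> _ _ _ _ [d1 [a1 [t1 [G1 [-> ->]]]]] [d2 [a2 [t2 [G2 [-> ->]]]]].
  exists (d1 + d2), (a1 + a2), (t1 + t2); split; first exact: GD.
  by rewrite scalerDl mulrDl addrACA [a1 + _ + _]addrACA.
- move=> u _ _ [d [a [t [Gda [-> ->]]]]].
  exists (u *: d), (u * a), (u * t); split; first exact: GZ.
  by rewrite scalerDr scalerA mulrDr mulrA.
- move=> _ _ [d [a [t [Gda [-> ->]]]]].
  have [t_lt0|t_gt0|->] := ltgtP t 0; last by rewrite scale0r mul0r !addr0; exact: Gp.
    (* for t < 0 use the bound for (-y, -c), whose upper bounds are the lower
       bounds of (y, c) *)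
    rewrite -[t]opprK scaleNr -scalerN mulNr -mulrN.
    apply: graph_ext_bound Gda _ => //; last by rewrite oppr_gt0.
    by move=> d' a' G'; rewrite lerNl opprB; exact: lb.
  exact: graph_ext_bound Gda _.
Qed.

Lemma graph_ext_constant G y : dominated_graph G -> G (0, 0) ->
  exists c, (forall d a, G (d, a) -> a - p (d - y) <= c) /\
            (forall d a, G (d, a) -> c <= p (d + y) - a).
Proof.
move=> [_ GD _ Gp] G00.
have lb_ub d a d' a' : G (d, a) -> G (d', a') -> a - p (d - y) <= p (d' + y) - a'.
  move=> Gda Gda'; have := Gp _ _ (GD _ _ _ _ Gda Gda').
  have := p_subadd (d - y) (d' + y); rewrite addrACA addNr addr0.
  lra.
pose S := [set r | exists d a, G (d, a) /\ r = a - p (d - y)].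
have S_ub d' a' : G (d', a') -> ubound S (p (d' + y) - a').
  by move=> Gda' _ [d [a [Gda ->]]]; exact: lb_ub Gda'.
exists (sup S); split=> [d a Gda|d' a' Gda'].
  by apply: ub_le_sup; [exists (p (0 + y) - 0); exact: S_ub G00 | exists d, a].
by apply: ge_sup; [exists (0 - p (0 - y)), 0, 0; split | exact: S_ub].
Qed.

Lemma dominated_graph_bigcup (Gs : set (set (V * R))) :
  (forall G, Gs G -> dominated_graph G) -> total_on Gs subset ->
  dominated_graph (\bigcup_(G in Gs) G).
Proof.
move=> Gs_dom Gs_tot.
have common q1 q2 : (\bigcup_(G in Gs) G) q1 -> (\bigcup_(G in Gs) G) q2 ->
    exists2 G, Gs G & G q1 /\ G q2.
  move=> [G1 GsG1 G1q1] [G2 GsG2 G2q2].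
  case: (Gs_tot _ _ GsG1 GsG2) => [G12|G21].
    by exists G2 => //; split=> //; exact: G12.
  by exists G1 => //; split=> //; exact: G21.
split.
- move=> x a b /common /[apply] -[G /Gs_dom[Gfun _ _ _] [Gxa Gxb]].
  exact: Gfun Gxa Gxb.
- move=> x a y b /common /[apply] -[G GsG [Gxa Gyb]].
  by exists G => //; have [_ GD _ _] := Gs_dom _ GsG; exact: GD.
- move=> t x a [G GsG Gxa].
  by exists G => //; have [_ _ GZ _] := Gs_dom _ GsG; exact: GZ.
- by move=> x a [G /Gs_dom[_ _ _ Gp] /Gp].
Qed.

Theorem hahn_banach_graph G0 : dominated_graph G0 -> G0 (0, 0) ->
  exists f : V -> R, [/\ scalar f, forall x, f x <= p x &
                         forall x a, G0 (x, a) -> f x = a].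
Proof.
move=> G0_dom G000.
(* set0 is allowed in Q because Zorn_bigcup also needs the empty chain. *)
pose Q G := dominated_graph G /\ (G = set0 \/ G0 `<=` G).
have [A [[A_dom A0] A_max]] : exists A, Q A /\ forall B, A `<` B -> ~ Q B.
  apply: Zorn_bigcup => Gs GsQ Gs_tot; split.
    by apply: dominated_graph_bigcup Gs_tot => G /GsQ[].
  have [[G GsG G0G]|noG] := pselect (exists2 G, Gs G & G0 `<=` G).
    by right=> q G0q; exists G => //; exact: G0G.
  left; apply/seteqP; split=> [q [G GsG Gq]|//].
  by case: (GsQ _ GsG) => _ [G_nil|G0G]; [rewrite G_nil in Gq | case: noG; exists G].
have G0A : G0 `<=` A.
  case: A0 => // A0; exfalso; apply: (A_max G0); last by split; [|right].
  by rewrite A0; split=> // /(_ _ G000).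
have A_total x : exists a, A (x, a).
  apply: contrapT => Ax.
  have [c [lb ub]] := graph_ext_constant x A_dom (G0A _ G000).
  apply: (A_max (graph_ext A x c)).
    split; first exact: graph_ext_sub.
    by move=> /(_ _ (graph_ext_point x c (G0A _ G000))) Axc; apply: Ax; exists c.
  split; first exact: dominated_graph_ext.
  by right; apply: subset_trans G0A (graph_ext_sub _ _).
have [f Af] := choice A_total; have [Afun AD AZ Ap] := A_dom.
exists f; split=> [t x y|x|x a G0xa].
- exact: Afun (Af _) (AD _ _ _ _ (AZ t _ _ (Af x)) (Af y)).
- exact: Ap (Af x).
- exact: Afun (Af x) (G0A _ G0xa).
Qed.

Corollary hahn_banach_point z :
  exists f : V -> R, [/\ scalar f, forall x, f x <= p x & f z = p z].
Proof.
have origin_dom : dominated_graph [set (0, 0)].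
  split=> [x a b [_ ->] [_ ->] //|x a y b [-> ->] [-> ->]|t x a [-> ->]|x a [-> ->]].
  - by rewrite /= !addr0.
  - by rewrite /= scaler0 mulr0.
  - by rewrite seminorm0.
have [->|z0] := eqVneq z 0.
  have [f [fL fp f0]] := hahn_banach_graph origin_dom erefl.
  by exists f; split=> //; rewrite seminorm0 (f0 0 0).
have Gz_dom : dominated_graph (graph_ext [set (0, 0)] z (p z)).
  apply: dominated_graph_ext => //.
  - by case=> a [/eqP]; rewrite (negbTE z0).
  - by move=> d a [-> ->]; rewrite !sub0r seminormN; have := seminorm_ge0 z; lra.
  - by move=> d a [-> ->]; rewrite add0r subr0.
have [f [fL fp fG]] := hahn_banach_graph Gz_dom (graph_ext_sub _ _ (erefl (0, 0))).
by exists f; split=> //; apply: fG; exact: graph_ext_point.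
Qed.

End HahnBanach.

Lemma separating_dual_real (R : realType) (F : normedModType R) :
  separating_dual F.
Proof.
move=> z z0.
have [f [fL f_le fz]] := hahn_banach_point (@ler_normD _ F) (@normrZ _ F) z.
have f_bound x : `|f x| <= 1 * `|x|.
  by rewrite mul1r ler_norml f_le andbT lerNl -scalarN // -normrN f_le.
have fz0 : f z != 0 by rewrite fz normr_eq0.
exists (fun x => (f z)^-1 * f x); last by rewrite mulVf.
apply: continuous_scalarZ; split=> //.
exact: bounded_zmod_morphism_continuous (zmod_morphism_linear fL) ltr01 f_bound.
Qed.

Local Open Scope complex_scope.
(* [Num.Theory] shadows [complex.Re]. *)
Local Notation Re := complex.Re.

Section Realified.
Variables (R : realType) (V : lmodType R[i]).

Definition realified : Type := V.
HB.instance Definition _ := GRing.Zmodule.on realified.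

Let scale_real (t : R) (x : realified) : realified := t%:C *: (x : V).

Fact scale_realA t u x : scale_real t (scale_real u x) = scale_real (t * u) x.
Proof. by rewrite /scale_real scalerA rmorphM. Qed.

Fact scale_real1 : left_id 1 scale_real.
Proof. by move=> x; rewrite /scale_real rmorph1 scale1r. Qed.

Fact scale_realDr : right_distributive scale_real +%R.
Proof. by move=> t x y; rewrite /scale_real scalerDr. Qed.

Fact scale_realDl x : {morph scale_real^~ x : t u / t + u}.
Proof. by move=> t u; rewrite /scale_real rmorphD scalerDl. Qed.

HB.instance Definition _ := GRing.Zmodule_isLmodule.Build R realified
  scale_realA scale_real1 scale_realDr scale_realDl.

End Realified.

Section ComplexFacts.
Variable R : realType.

Lemma normc_real (t : R) : `|t%:C| = `|t|%:C.
Proof. by rewrite normc_def /= expr0n addr0 sqrtr_sqr. Qed.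

Lemma normc_i : `|'i| = 1 :> R[i].
Proof. by rewrite normc_def /= expr0n add0r expr1n sqrtr1. Qed.

Lemma ReD (a b : R[i]) : Re (a + b) = Re a + Re b.
Proof. by case: a; case: b. Qed.

Lemma Re_realM (t : R) (w : R[i]) : Re (t%:C * w) = t * Re w.
Proof. by case: w => a b /=; rewrite mul0r subr0. Qed.

End ComplexFacts.

Section Complexified.
Variables (R : realType) (V : lmodType R[i]) (u : realified V -> R).
Hypothesis uL : scalar u.

Definition complexified (x : V) : R[i] := (u x)%:C - 'i * (u ('i *: x))%:C.

Let uD (x y : V) : u (x + y) = u x + u y := @scalarD _ (realified V) u x y uL.
Let uR t (x : V) : u (t%:C *: x) = t * u x := @scalable_linear _ (realified V) _ _ u uL t x.
Let uN (x : V) : u (- x) = - u x := @scalarN _ (realified V) u x uL.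

Lemma Re_complexified x : Re (complexified x) = u x.
Proof. by rewrite /complexified /= mul0r mulr0 !subr0. Qed.

Lemma complexified_scalar : scalar complexified.
Proof.
have gD x y : complexified (x + y) = complexified x + complexified y.
  by rewrite /complexified scalerDr !uD !rmorphD mulrDr addrACA opprD.
have gR t x : complexified (t%:C *: x) = t%:C * complexified x.
  rewrite /complexified.
  have -> : 'i *: (t%:C *: x) = t%:C *: ('i *: x) by rewrite !scalerA mulrC.
  by rewrite !uR !rmorphM mulrBr mulrCA.
have gI x : complexified ('i *: x) = 'i * complexified x.
  rewrite /complexified scalerA -expr2 sqr_i scaleN1r uN rmorphN mulrN opprK.
  by rewrite mulrBr mulrA -expr2 sqr_i mulN1r opprK addrC.
move=> a x y; rewrite gD; congr (_ + _).
rewrite [in LHS](complexE a) scalerDl -scalerA gD gR gI gR.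
by rewrite [in RHS](complexE a) mulrDl mulrA.
Qed.

End Complexified.

Lemma complexified_bound (R : realType) (F : normedModType R[i])
    (u : realified F -> R) :
  (forall y : F, `|(u y)%:C| <= `|y|) ->
  forall x, `|complexified u x| <= 2%:R * `|x|.
Proof.
move=> u_bound x; apply: (le_trans (ler_normB _ _)).
rewrite normrM normc_i mul1r mulr2n mulrDl mul1r lerD //.
by have := u_bound ('i *: x); rewrite normrZ normc_i mul1r.
Qed.

Lemma separating_dual_complex (R : realType) (F : normedModType R[i]) :
  separating_dual F.
Proof.
move=> z z0.
pose p (x : realified F) : R := Re `|x : F|.
have p_subadd x y : p (x + y) <= p x + p y.
  by have := ler_normD (x : F) y; rewrite lecE ReD => /andP[].
have p_homog t x : p (t *: x) = `|t| * p x.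
  by rewrite /p (normrZ t%:C (x : F)) normc_real Re_realM.
have [u [uL u_le uz]] := hahn_banach_point p_subadd p_homog z.
have u_bound (x : F) : `|(u x)%:C| <= `|x|.
  rewrite normc_real -(RRe_real (normr_real x)) lecR ler_norml u_le andbT.
  rewrite lerNl -(@scalarN _ (realified F)) //.
  by have := u_le (- x); rewrite /p normrN.
have gz0 : complexified u z != 0.
  apply/eqP => gz_eq0; have Re_z : Re `|z| = Re 0.
    by rewrite -gz_eq0 Re_complexified uz.
  by have := normr_gt0 z; rewrite z0 ltcE Re_z ltxx andbF.
exists (fun x => (complexified u z)^-1 * complexified u x); last by rewrite mulVf.
have gL := complexified_scalar uL.
apply: continuous_scalarZ; split=> //.
exact: bounded_zmod_morphism_continuous (zmod_morphism_linear gL) (ltr0Sn _ 1)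
  (complexified_bound u_bound).
Qed.

Lemma thm13_over_of_separating_dual (K : numFieldType) :
  (forall F : completeNormedModType K, separating_dual F) -> thm13_over K.
Proof.
move=> sepK E F m P _ _; split.
- by move=> Pfin k _; exact: Delta_finite_rank_of_finite_rank.
- by move=> DeltaP; exists 1%N; split=> //; exact: DeltaP.
- by move=> [k [k_gt0 DeltaP]]; exact: finite_rank_of_Delta (sepK F) k_gt0 DeltaP.
Qed.

Theorem mainTheorem13 (R : realType) : thm13_over R /\ thm13_over R[i].
Proof.
split; apply: thm13_over_of_separating_dual => F.
  exact: separating_dual_real.
exact: separating_dual_complex.
Qed.
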